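(* Let $\mathcal C$ be an irredundant 3-SAT formula and let $u,v,w$ be distinct variables. Suppose there are distinct variables $a,b\notin\{u,v,w\}$ with $abu,abv,abw\in\mathcal C$. Then (a) $\bar u\bar v w\notin\mathcal C$; and (b) if $\bar u\bar v\bar w\in\mathcal C$, then there is no variable $c\notin\{u,v,w,a,b\}$ with $abc\in\mathcal C$.
   Context: A clause is a conjunction of three literals on three distinct variables, written as juxtaposition (e.g. $\bar u\bar v w=\bar u\wedge\bar v\wedge w$); a formula is a nonempty set of clauses. $\mathcal C$ is irredundant if every $C\in\mathcal C$ has a witness: an assignment satisfying $C$ and no other clause of $\mathcal C$. *)

From mathcomp Require Import all_boot.
Set Implicit Arguments. Unset Strict Implicit. Unset Printing Implicit Defensive.

(* A literal over variables V: (x, true) is x, (x, false) is \bar x. *)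
Definition lit (V : finType) := (V * bool)%type.

(* A clause: a set of exactly three literals on three distinct variables,
   read as their conjunction. *)
Definition is_clause (V : finType) (C : {set lit V}) : bool :=
  (#|C| == 3) && [forall l in C, forall l' in C, (l.1 == l'.1) ==> (l == l')].

Definition is_formula (V : finType) (F : {set {set lit V}}) : bool :=
  (F != set0) && [forall C in F, is_clause C].

Definition sat (V : finType) (f : V -> bool) (C : {set lit V}) : bool :=
  [forall l in C, f l.1 == l.2].

Definition irredundant (V : finType) (F : {set {set lit V}}) : Prop :=
  forall C, C \in F ->
    exists f : V -> bool, sat f C /\ (forall D, D \in F -> D != C -> ~~ sat f D).

Definition cl3 (V : finType) (x y z : lit V) : {set lit V} := [set x; y; z].

From mathcomp Require Import all_boot.
Set Implicit Arguments. Unset Strict Implicit.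

(* Take a witness f of a clause a b z of the fan.  It sets a, b, z true, so it
   must set x false for every other fan clause a b x; and it satisfies no
   clause with a negative literal.  For (a) take z = w: then f satisfies
   ū v̄ w.  For (b) take z = c: then f satisfies ū v̄ w̄. *)

Lemma sat_cl3 (V : finType) (f : V -> bool) (x y z : lit V) :
  sat f (cl3 x y z) = [&& f x.1 == x.2, f y.1 == y.2 & f z.1 == z.2].
Proof.
apply/forall_inP/and3P => [fC | [fx fy fz] l].
  by split; apply: fC; rewrite !inE eqxx ?orbT.
by rewrite !inE -orbA => /or3P[] /eqP->.
Qed.

Lemma neq_set_mem (T : finType) (x : T) (A B : {set T}) :
  x \in A -> x \notin B -> B != A.
Proof. by move=> xA; apply: contraNneq => ->. Qed.

Section FanWitness.

Variables (V : finType) (F : {set {set lit V}}) (a b z : V).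
Hypotheses (irrF : irredundant F) (az : a != z) (bz : b != z).
Hypothesis abzF : cl3 (a, true) (b, true) (z, true) \in F.

Lemma fan_witness : exists f : V -> bool,
  [/\ f z,
      forall x, x != z -> cl3 (a, true) (b, true) (x, true) \in F -> f x = false &
      forall D l, D \in F -> l \in D -> ~~ l.2 -> ~~ sat f D].
Proof.
have [f [fC fD]] := irrF abzF.
move: fC; rewrite sat_cl3 /= => /and3P[/eqP fa /eqP fb /eqP fz].
exists f; split=> // [x xz abxF | D [y []] DF yD // _].
  have : ~~ sat f (cl3 (a, true) (b, true) (x, true)).
    apply: fD abxF (@neq_set_mem _ (z, true) _ _ _ _); rewrite !inE ?eqxx ?orbT //.
    by rewrite !xpair_eqE !andbT !(eq_sym z) (negbTE az) (negbTE bz) (negbTE xz).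
  by rewrite sat_cl3 /= fa fb; case: (f x).
apply: fD DF _; rewrite eq_sym; apply: neq_set_mem yD _.
by rewrite !inE !xpair_eqE !andbF.
Qed.

End FanWitness.

Theorem mainTheorem8 (V : finType) (F : {set {set lit V}}) (u v w a b : V) :
  is_formula F -> irredundant F ->
  uniq [:: u; v; w] -> uniq [:: a; b; u; v; w] ->
  cl3 (a, true) (b, true) (u, true) \in F ->
  cl3 (a, true) (b, true) (v, true) \in F ->
  cl3 (a, true) (b, true) (w, true) \in F ->
  (cl3 (u, false) (v, false) (w, true) \notin F) /\
  (cl3 (u, false) (v, false) (w, false) \in F ->
   forall c : V, c \notin [:: u; v; w; a; b] ->
     cl3 (a, true) (b, true) (c, true) \notin F).
Proof.
move=> _ irrF _ /= abuvw abuF abvF abwF.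
move: abuvw; rewrite !inE !negb_or.
move=> /and5P[/and4P[_ _ _ aw] /and3P[_ _ bw] /andP[_ uw] vw _].
split.
  apply/negP => uvwF.
  have [f [fw fab fneg]] := fan_witness irrF aw bw abwF.
  have := fneg _ (u, false) uvwF; rewrite !inE eqxx sat_cl3 /= => /(_ isT isT).
  by rewrite fw (fab u uw abuF) (fab v vw abvF).
move=> uvwF c; rewrite !inE !(eq_sym c) !negb_or => /and5P[uc vc wc ac bc]; apply/negP => abcF.
have [f [_ fab fneg]] := fan_witness irrF ac bc abcF.
have := fneg _ (u, false) uvwF; rewrite !inE eqxx sat_cl3 /= => /(_ isT isT).
by rewrite (fab u) ?(fab v) ?(fab w).
Qed.
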